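(* Let $w=i_n\cdots i_1$ be a reverse lattice word and $\sigma=\mathrm{std}(w)$. Then the column reading word of $T_w$ equals $\sigma^{-1}$ (in one-line notation).
   Context: A word $w=i_n\cdots i_1$ of positive integers is reverse lattice if in every suffix $i_k\cdots i_1$ the number of $j$'s is at least the number of $(j+1)$'s for every $j\geq1$. $\mathrm{std}(w)$: replace the letters of $w$ (read left to right) by $1,\ldots,n$, smaller letters receiving smaller values, equal letters receiving increasing values from left to right; the result is a permutation in one-line notation. Partitions in French convention (rows numbered bottom to top). For a reverse lattice word, define partitions $\lambda_0=\varnothing$ and, for $k=1,\ldots,n$, $\lambda_k$ obtained from $\lambda_{k-1}$ by adding a box at its addable node in column $i_k$; $T_w$ is the standard reverse tableau of shape $\lambda_n$ in which the box of $\lambda_k$ not in $\lambda_{k-1}$ contains $n-k+1$. The column reading word of a tableau lists the entries of each column in increasing order, columns from left to right. *)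

From mathcomp Require Import all_boot.
Set Implicit Arguments. Unset Strict Implicit. Unset Printing Implicit Defensive.

(* A word w = i_n ... i_1 is represented by the list [:: i_n; ...; i_1]
   (read left to right).  Hence i_k = nth 0 w (size w - k). *)

Definition reverse_lattice (w : seq nat) : Prop :=
  (forall i, i \in w -> 0 < i) /\
  (forall k j, 1 <= j -> count_mem j.+1 (drop k w) <= count_mem j (drop k w)).

Definition std (w : seq nat) : seq nat :=
  [seq (count (fun y => y < nth 0 w p) w
        + count (pred1 (nth 0 w p)) (take p w)).+1 | p <- iota 0 (size w)].

Definition inv_oneline (s : seq nat) : seq nat :=
  [seq (index r s).+1 | r <- iota 1 (size s)].

(* Tableaux (French convention) as lists of rows, row 1 (bottom) first;
   each row lists its entries from column 1 rightwards. *)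
Definition tableau := seq (seq nat).

Definition shape (t : tableau) : seq nat := [seq size r | r <- t].

Definition col_length (lam : seq nat) (c : nat) : nat := count (fun l => c <= l) lam.

(* Add entry e at the addable node in column c: this node lies in row
   (col_length c) + 1, i.e. row index col_length c (0-indexed). *)
Definition add_box (t : tableau) (c e : nat) : tableau :=
  let r := col_length (shape t) c in
  set_nth [::] t r (rcons (nth [::] t r) e).

Definition Tw (w : seq nat) : tableau :=
  foldl (fun t k => add_box t (nth 0 w (size w - k)) (size w - k).+1)
        [::] (iota 1 (size w)).

Definition column (t : tableau) (c : nat) : seq nat :=
  [seq nth 0 r c.-1 | r <- t & c <= size r].

Definition col_reading_word (t : tableau) : seq nat :=
  flatten [seq sort leq (column t c) | c <- iota 1 (size (head [::] t))].

From mathcomp Require Import all_boot zify.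
Set Implicit Arguments. Unset Strict Implicit. Unset Printing Implicit Defensive.

(* The lattice condition guarantees that, when the letters of w are added from
   right to left, each new box of column c lands on top of column c and below the
   top of column c - 1.  Hence every lambda_k is a partition and column c of T_w
   lists the positions of the letter c in w, from right to left.  Reading the
   columns left to right, each in increasing order, lists the positions of the 1's,
   then of the 2's, and so on; the position p of w is then found at place
   #{letters < w_p} + #{letters = w_p left of p} + 1 = std(w)(p), so the reading
   word is std(w)^{-1}. *)

Definition addable (lam : seq nat) (c : nat) : bool :=
  (0 < c) && ((c == 1) || (col_length lam c < col_length lam c.-1)).

Section Partition.

Variable lam : seq nat.
Hypothesis lam_partition : sorted geq lam.

Lemma leq_nthS i : nth 0 lam i.+1 <= nth 0 lam i.
Proof.
case: (ltnP i.+1 (size lam)) => [lt_i1|le_i1]; last by rewrite nth_default.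
by move/(sortedP 0): lam_partition => /(_ i lt_i1).
Qed.

Lemma leq_nth_col_length i c : 0 < c -> (c <= nth 0 lam i) = (i < col_length lam c).
Proof.
move=> c_gt0; elim: lam lam_partition i => [|a l IH] /= a_l i.
  by rewrite nth_nil leqNgt c_gt0.
have l_le_a : all (geq a) l := order_path_min (rev_trans leq_trans) a_l.
case: (leqP c a) => [le_ca|lt_ac] /=.
  by case: i => [|i] //=; rewrite IH ?(path_sorted a_l).
have -> : col_length l c = 0.
  apply/eqP; rewrite -leqn0 leqNgt -has_count; apply/hasPn => x /(allP l_le_a) /=.
  by rewrite -ltnNge => /leq_ltn_trans; apply.
case: i => [|i] /=; first by rewrite leqNgt lt_ac.
apply/negbTE; rewrite -ltnNge; case: (ltnP i (size l)) => [i_lt|i_ge].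
  by apply: leq_ltn_trans lt_ac; apply: (allP l_le_a); rewrite mem_nth.
by rewrite nth_default.
Qed.

Lemma nth_col_length c : addable lam c -> nth 0 lam (col_length lam c) = c.-1.
Proof.
case/andP=> c_gt0 lattice_c.
have := leq_nth_col_length (col_length lam c) c_gt0; rewrite ltnn => /negbT; rewrite -ltnNge.
case: eqP lattice_c => [-> _|c_neq1 /= lt_col]; first by case: nth.
have c1_gt0 : 0 < c.-1 by move: c_gt0 c_neq1; lia.
by have := leq_nth_col_length (col_length lam c) c1_gt0; rewrite lt_col; lia.
Qed.

Lemma sorted_set_nth_col_length c :
  addable lam c -> sorted geq (set_nth 0 lam (col_length lam c) c).
Proof.
move=> add_c; have c_gt0 : 0 < c by case/andP: add_c.
apply/(sortedP 0) => i _; rewrite /geq !nth_set_nth /=.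
set r := col_length lam c.
have [->|ne_ir] := eqVneq i r.
  rewrite (gtn_eqF (ltnSn r)); move: (leq_nth_col_length r.+1 c_gt0).
  by rewrite ltnNge leqnSn /= => /negbT; rewrite -ltnNge => /ltnW.
case: ifP => [/eqP eq_i1r|_]; last exact: leq_nthS.
by rewrite leq_nth_col_length // eq_i1r.
Qed.

End Partition.

Lemma nth_shape (t : tableau) i : nth 0 (shape t) i = size (nth [::] t i).
Proof.
case: (ltnP i (size t)) => [lt_it|le_ti]; first by rewrite (nth_map [::]).
by rewrite !nth_default ?size_map.
Qed.

Lemma col_length_le_size (t : tableau) c : col_length (shape t) c <= size t.
Proof. by rewrite -(size_map size t) count_size. Qed.

Lemma size_column (t : tableau) c : size (column t c) = col_length (shape t) c.
Proof. by rewrite size_map size_filter /col_length count_map. Qed.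

Lemma column_cat (t1 t2 : tableau) c : column (t1 ++ t2) c = column t1 c ++ column t2 c.
Proof. by rewrite /column filter_cat map_cat. Qed.

Lemma column_nth_split (t : tableau) r c : 0 < c ->
  column t c = column (take r t) c ++ column [:: nth [::] t r] c ++ column (drop r.+1 t) c.
Proof.
move=> c_gt0; case: (ltnP r (size t)) => [lt_rt|le_tr].
  by rewrite -{1}(cat_take_drop r t) (drop_nth [::] lt_rt) column_cat -cat1s column_cat.
rewrite nth_default // take_oversize ?drop_oversize ?(leqW le_tr) //.
by rewrite /column /= leqNgt c_gt0 !cats0.
Qed.

Lemma column_set_nth (t : tableau) r row c : r <= size t ->
  column (set_nth [::] t r row) c
  = column (take r t) c ++ column [:: row] c ++ column (drop r.+1 t) c.
Proof.
rewrite leq_eqVlt set_nthE => /orP[/eqP->|lt_rt].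
  by rewrite ltnn subnn take_size drop_oversize // column_cat /= cats0.
by rewrite lt_rt column_cat -cat1s column_cat.
Qed.

Lemma column_drop_col_length (t : tableau) c i : sorted geq (shape t) -> 0 < c ->
  col_length (shape t) c <= i -> column (drop i t) c = [::].
Proof.
move=> t_partition c_gt0 le_col_i; apply/eqP; rewrite -size_eq0 size_column.
rewrite /col_length /shape map_drop -/(shape t) eqn0Ngt -has_count.
apply/hasPn => _ /(nthP 0)[j _ <-]; rewrite nth_drop leq_nth_col_length // -leqNgt.
exact: leq_trans le_col_i (leq_addr _ _).
Qed.

Section AddBox.

Variables (t : tableau) (c e : nat).
Hypotheses (t_partition : sorted geq (shape t)) (c_addable : addable (shape t) c).

Let r := col_length (shape t) c.

Lemma size_nth_col_length : size (nth [::] t r) = c.-1.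
Proof. by rewrite -nth_shape nth_col_length. Qed.

Lemma shape_add_box : shape (add_box t c e) = set_nth 0 (shape t) r c.
Proof.
have c_gt0 : 0 < c by case/andP: c_addable.
apply: (@eq_from_nth _ 0) => [|i _]; first by rewrite size_map !size_set_nth size_map.
rewrite nth_shape !nth_set_nth /= -/r; case: eqP => [_|_]; last exact/esym/nth_shape.
by rewrite size_rcons size_nth_col_length prednK.
Qed.

Lemma sorted_shape_add_box : sorted geq (shape (add_box t c e)).
Proof. by rewrite shape_add_box; apply: sorted_set_nth_col_length. Qed.

Lemma column_add_box c' : 0 < c' ->
  column (add_box t c e) c' = if c' == c then rcons (column t c) e else column t c'.
Proof.
have c_gt0 : 0 < c by case/andP: c_addable.
move=> c'_gt0; rewrite /add_box -/r column_set_nth ?col_length_le_size //.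
have size_row' : size (rcons (nth [::] t r) e) = c.
  by rewrite size_rcons size_nth_col_length prednK.
case: eqP => [->|/eqP ne_c'c]; rewrite (@column_nth_split t r) //.
  rewrite column_drop_col_length // /column /= size_row' size_nth_col_length leqnn.
  rewrite leqNgt ltn_predL c_gt0 /= nth_rcons size_nth_col_length ltnn eqxx.
  by rewrite cats0 cats1.
congr (_ ++ _ ++ _); rewrite /column /= size_row' size_nth_col_length.
have -> : (c' <= c) = (c' <= c.-1) by move: ne_c'c; lia.
case: ifP => //= le_c'c; rewrite nth_rcons size_nth_col_length.
by have -> : c'.-1 < c.-1 by lia.
Qed.

End AddBox.

Definition lattice_step (u : seq nat) (c : nat) : bool :=
  (0 < c) && ((c == 1) || (count_mem c u < count_mem c.-1 u)).

Definition yamanouchi (u : seq nat) : Prop :=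
  forall i, i < size u -> lattice_step (take i u) (nth 0 u i).

Lemma yamanouchi_rcons u c : yamanouchi (rcons u c) -> yamanouchi u /\ lattice_step u c.
Proof.
move=> yam_uc; split=> [i lt_iu|].
  have := yam_uc i; rewrite size_rcons nth_rcons -cats1 take_cat lt_iu ltnS ltnW //.
  by apply.
have := yam_uc (size u); rewrite size_rcons nth_rcons -cats1 take_cat ltnn subnn cats0.
by rewrite eqxx; apply.
Qed.

Definition fill (s : seq (nat * nat)) : tableau := foldl (fun t x => add_box t x.1 x.2) [::] s.

Lemma fill_spec s : yamanouchi (unzip1 s) ->
  sorted geq (shape (fill s)) /\
  forall c, 0 < c -> column (fill s) c = [seq x.2 | x <- s & x.1 == c].
Proof.
elim/last_ind: s => [|s [c e] IH]; first by split=> // c _; rewrite /column.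
rewrite /unzip1 map_rcons => /yamanouchi_rcons[/IH[s_partition s_columns] step_c].
have col_length_fill c' : 0 < c' -> col_length (shape (fill s)) c' = count_mem c' (unzip1 s).
  by move=> c'_gt0; rewrite -size_column s_columns // size_map size_filter count_map.
have c_addable : addable (shape (fill s)) c.
  case/andP: step_c => /= c_gt0; rewrite /addable c_gt0 /=.
  by case: eqP => //= c_neq1; rewrite !col_length_fill //; lia.
rewrite /fill foldl_rcons -/(fill s) /=; split; first exact: sorted_shape_add_box.
move=> c' c'_gt0; rewrite column_add_box // filter_rcons /=.
by rewrite eq_sym; case: eqP => [->|_]; rewrite ?map_rcons s_columns.
Qed.

Lemma foldl_map (A B C : Type) (f : A -> B -> A) (g : C -> B) z s :
  foldl f z (map g s) = foldl (fun a x => f a (g x)) z s.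
Proof. by elim: s z => //= x s IH z. Qed.

Lemma rev_iota0 n : rev (iota 0 n) = [seq n - k | k <- iota 1 n].
Proof.
apply: (@eq_from_nth _ 0) => [|i]; rewrite size_rev ?size_map !size_iota // => lt_in.
rewrite nth_rev ?size_iota // (nth_map 0) ?size_iota // !nth_iota //; lia.
Qed.

Definition positions (w : seq nat) (c : nat) : seq nat :=
  [seq p.+1 | p <- iota 0 (size w) & nth 0 w p == c].

Lemma size_positions w c : size (positions w c) = count_mem c w.
Proof. by rewrite size_map size_filter -[in RHS](mkseq_nth 0 w) count_map. Qed.

Lemma sorted_positions w c : sorted leq (positions w c).
Proof.
rewrite /positions sorted_map; apply: sorted_filter; first exact: leq_trans.
by apply: sub_sorted (iota_ltn_sorted 0 _) => x y /ltnW.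
Qed.

Lemma reverse_lattice_yamanouchi w : reverse_lattice w -> yamanouchi (rev w).
Proof.
case=> w_pos w_lattice i; rewrite size_rev => lt_iw.
set p := size w - i.+1; have lt_pw : p < size w by rewrite /p; lia.
rewrite take_rev nth_rev // (_ : size w - i = p.+1); last by rewrite /p; lia.
set c := nth 0 w p; have c_gt0 : 0 < c by rewrite w_pos ?mem_nth.
rewrite /lattice_step !count_rev c_gt0 /=; case: eqP => //= /eqP c_neq1.
have := w_lattice p c.-1; rewrite (drop_nth 0 lt_pw) /= -/c prednK //.
by rewrite eqxx gtn_eqF ?ltn_predL // add1n add0n; apply; lia.
Qed.

Lemma Tw_spec w : reverse_lattice w ->
  sorted geq (shape (Tw w)) /\ forall c, 0 < c -> column (Tw w) c = rev (positions w c).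
Proof.
move=> w_lattice; set s := [seq (nth 0 w p, p.+1) | p <- rev (iota 0 (size w))].
have -> : Tw w = fill s by rewrite /fill foldl_map /Tw rev_iota0 foldl_map.
have s_letters : unzip1 s = rev w.
  by rewrite /unzip1 -map_comp map_rev; congr rev; apply: mkseq_nth.
have := reverse_lattice_yamanouchi w_lattice.
rewrite -s_letters => /fill_spec[s_partition s_columns].
split=> // c c_gt0; rewrite s_columns //.
by rewrite filter_map -map_comp filter_rev map_rev.
Qed.

Lemma letter_le_size_head w c : reverse_lattice w -> c \in w ->
  c <= size (head [::] (Tw w)).
Proof.
move=> w_lattice c_in_w; have c_gt0 : 0 < c by case: w_lattice => w_pos _; apply: w_pos.
have [Tw_partition Tw_columns] := Tw_spec w_lattice.
rewrite -nth0 -nth_shape leq_nth_col_length // -size_column Tw_columns // size_rev.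
by rewrite size_positions -has_count has_pred1.
Qed.

Lemma col_reading_word_Tw w : reverse_lattice w ->
  col_reading_word (Tw w) = flatten [seq positions w c | c <- iota 1 (size (head [::] (Tw w)))].
Proof.
move=> w_lattice; have [_ Tw_columns] := Tw_spec w_lattice.
congr flatten; apply/eq_in_map => c; rewrite mem_iota => /andP[c_gt0 _].
rewrite Tw_columns //.
have /(perm_sortP leq_total leq_trans anti_leq) -> :
    perm_eq (rev (positions w c)) (positions w c) by rewrite perm_rev.
by rewrite sorted_sort //; [apply: leq_trans | apply: sorted_positions].
Qed.

Lemma nth_positions w p : p < size w ->
  nth 0 (positions w (nth 0 w p)) (count_mem (nth 0 w p) (take p w)) = p.+1.
Proof.
move=> lt_pw; have split_w : size w = p + (size w - p.+1).+1 by lia.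
rewrite /positions {1}split_w iotaD filter_cat map_cat /= add0n eqxx /= nth_cat.
by rewrite size_map size_filter -(map_nth_iota0 0 (ltnW lt_pw)) count_map ltnn subnn.
Qed.

Lemma size_flatten_positions w k :
  size (flatten [seq positions w c | c <- iota 1 k]) = count (fun x => 0 < x <= k) w.
Proof.
elim: k => [|k IHk]; first by rewrite /= (@eq_count _ _ pred0) ?count_pred0 // => -[].
rewrite -[X in iota _ X]addn1 iotaD map_cat flatten_cat size_cat IHk /= cats0.
rewrite size_positions add1n.
elim: w {IHk} => //= x w IHw; rewrite -IHw.
case: (ltngtP x k.+1) => [|lt_kx|->]; rewrite ?add0n ?addnA.
- by rewrite ltnS => ->; rewrite andbT.
- by rewrite (leqNgt x k) (ltnW lt_kx) andbF.
- by rewrite ltnn andbF /= add0n addn1 addSn.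
Qed.

Lemma nth_flatten_positions_std w m p : {in w, forall x, 0 < x <= m} -> p < size w ->
  nth 0 (flatten [seq positions w c | c <- iota 1 m]) (nth 0 (std w) p).-1 = p.+1.
Proof.
move=> w_bounded lt_pw; set c := nth 0 w p.
have /andP[c_gt0 le_cm] : 0 < c <= m by apply/w_bounded/mem_nth.
have split_m : m = c.-1 + (m - c).+1 by lia.
rewrite {1}split_m iotaD map_cat flatten_cat /= add1n prednK // nth_cat.
rewrite size_flatten_positions (@eq_in_count _ _ (fun x => x < c)); last first.
  by move=> x /w_bounded; lia.
rewrite /std (nth_map 0) ?size_iota // nth_iota // -/c add0n /= ltnNge leq_addr /= addKn.
have lt_count : count_mem c (take p w) < count_mem c w.
  rewrite -[in X in _ < X](cat_take_drop p w) count_cat (drop_nth 0 lt_pw) /= -/c eqxx.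
  by rewrite add1n addnS ltnS leq_addr.
by rewrite nth_cat size_positions lt_count nth_positions.
Qed.

Lemma inv_oneline_eq (s L : seq nat) : size L = size s ->
  (forall p, p < size s -> 0 < nth 0 s p) ->
  (forall p, p < size s -> nth 0 L (nth 0 s p).-1 = p.+1) -> inv_oneline s = L.
Proof.
move=> size_L s_pos L_inv.
have s_bounded p : p < size s -> nth 0 s p \in iota 1 (size s).
  move=> lt_ps; rewrite mem_iota s_pos //= add1n ltnNge; apply/negP => ge_s.
  have := L_inv p lt_ps; rewrite nth_default //; have := s_pos p lt_ps; lia.
have s_uniq : uniq s.
  apply/(uniqP 0) => p q; rewrite !inE => lt_ps lt_qs eq_pq.
  by apply: succn_inj; rewrite -L_inv // -(L_inv q) // eq_pq.
have s_sub : {subset s <= iota 1 (size s)} by move=> _ /(nthP 0)[p lt_ps <-]; apply: s_bounded.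
have [_ s_iota] := uniq_min_size s_uniq s_sub (eq_leq (size_iota _ _)).
apply: (@eq_from_nth _ 0) => [|i]; rewrite size_map size_iota // => lt_is.
have i1_in_s : i.+1 \in s by rewrite s_iota mem_iota; lia.
rewrite (nth_map 0) ?size_iota // nth_iota // add1n.
by rewrite -L_inv ?index_mem // nth_index.
Qed.

Lemma inv_oneline_std w m : {in w, forall x, 0 < x <= m} ->
  inv_oneline (std w) = flatten [seq positions w c | c <- iota 1 m].
Proof.
move=> w_bounded; have size_std : size (std w) = size w by rewrite size_map size_iota.
apply: inv_oneline_eq; rewrite size_std.
- rewrite size_flatten_positions; apply/eqP; rewrite -all_count; exact/allP.
- by move=> p lt_pw; rewrite (nth_map 0) ?size_iota.
- by move=> p; apply: nth_flatten_positions_std.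
Qed.

Unset Implicit Arguments.

Theorem lemma8p1 (w : seq nat) :
  reverse_lattice w -> col_reading_word (Tw w) = inv_oneline (std w).
Proof.
move=> w_lattice; rewrite col_reading_word_Tw //.
rewrite (inv_oneline_std (m := size (head [::] (Tw w)))) //.
move=> x x_in_w; rewrite letter_le_size_head // andbT.
by case: w_lattice => w_pos _; apply: w_pos.
Qed.
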